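(* Consider the problem of minimizing $\pmb{c}^T\pmb{x}$ subject to $\pmb{x}\in\mathbb{X}$ and, for each $r\in[m]$, the constraint $$\max_{\pmb{p}\in\mathcal{P}(\pi_r)}\sum_{i\in[K_r]}p_i\,(\pmb{a}^{r}_i)^T\pmb{x}\le b_r,$$ where for each $r$, $\pmb{a}^r_1,\dots,\pmb{a}^r_{K_r}\in\mathbb{R}^n$ are scenarios and $\pi_r:[K_r]\to[0,1]$ is a possibility distribution with $\pi_r(1)\ge\dots\ge\pi_r(K_r)$, $\pi_r(1)=1$. If $\mathbb{X}\subseteq\mathbb{R}^n$ is a polyhedron described by a finite system of linear constraints, then this problem is equivalent to a linear programming problem (in the variables $\pmb{x}$ together with auxiliary variables $\beta^r\in\mathbb{R}$, $\alpha^r_j\ge 0$), whose size is polynomial in $n$, $m$, $\sum_r K_r$ and the size of the description of $\mathbb{X}$.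
   Context: $\pmb{c}\in\mathbb{R}^n$, $\pmb{b}\in\mathbb{R}^m$. For a possibility distribution $\pi:[K]\to[0,1]$, $\mathcal{P}(\pi)$ denotes the set of all $\pmb{p}\in\mathbb{R}^K$ with $p_i\ge0$, $\sum_{i\in[K]}p_i=1$, and $\sum_{i\in A}p_i\ge 1-\max_{i\notin A}\pi(i)$ for every nonempty $A\subsetneq[K]$ (the set of probability distributions on the scenario indices consistent with $\pi$, i.e. dominating the necessity measure induced by $\pi$). *)

From HB Require Import structures.
From mathcomp Require Import all_boot all_order all_algebra.
From mathcomp Require Import reals.
Set Implicit Arguments. Unset Strict Implicit. Unset Printing Implicit Defensive.
Import Order.TTheory GRing.Theory Num.Theory.
Local Open Scope ring_scope.

Definition lemx (R : realType) (p q : nat) (A B : 'M[R]_(p, q)) : Prop :=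
  forall i j, A i j <= B i j.

(* pi : [K] -> [0,1] is a possibility distribution, sorted nonincreasingly,
   with pi(1) = 1 (index 1 of the paper is ordinal 0 here). *)
Definition sorted_possibility (R : realType) (K : nat) (pi : 'I_K -> R) : Prop :=
  (forall i, 0 <= pi i <= 1) /\
  (forall i j : 'I_K, (i <= j)%N -> pi j <= pi i) /\
  (forall i : 'I_K, val i = 0%N -> pi i = 1).

(* P(pi): probability vectors dominating the necessity measure of pi.
   For nonempty proper A, ~:A is nonempty and pi >= 0, so the big max with
   neutral element 0 is the max of pi over the complement of A. *)
Definition in_P (R : realType) (K : nat) (pi : 'I_K -> R) (p : 'I_K -> R) : Prop :=
  (forall i, 0 <= p i) /\
  (\sum_i p i = 1) /\
  (forall A : {set 'I_K}, A != set0 -> A != setT ->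
     \sum_(i in A) p i >= 1 - \big[Num.max/0]_(i in ~: A) pi i).

Definition robust_feasible (R : realType) (n m q : nat)
  (D : 'M[R]_(q, n)) (d : 'cV[R]_q)
  (K : 'I_m -> nat) (a : forall r : 'I_m, 'I_(K r) -> 'rV[R]_n)
  (pi : forall r : 'I_m, 'I_(K r) -> R) (b : 'I_m -> R) (x : 'cV[R]_n) : Prop :=
  lemx (D *m x) d /\
  forall r : 'I_m, forall p : 'I_(K r) -> R, in_P (pi r) p ->
    \sum_(i < K r) p i * (a r i *m x) 0 0 <= b r.

(* With pi extended by pi_K = 0, the weights w_j = pi_j - pi_(j+1) are
   nonnegative and sum to 1.  Every p in P(pi) puts mass at most pi_l on the
   tail {l, ..., K-1} (take A = {0, ..., l-1}), so summation by parts gives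
   sum_i p_i v_i <= sum_j w_j t_j for every nondecreasing t >= v.  Conversely,
   the distribution moving w_j to the first index where max_(i<=j) v_i is
   attained lies in P(pi), and its expectation is sum_j w_j max_(i<=j) v_i.
   Hence the robust constraint of row r holds iff some nondecreasing
   t >= (a^r_j x)_j has sum_j w_j t_j <= b_r: a linear system with K_r
   auxiliary variables and 2 K_r + 1 inequalities. *)

From HB Require Import structures.
From mathcomp Require Import all_boot all_order all_algebra.
From mathcomp Require Import reals lra.
Set Implicit Arguments. Unset Strict Implicit. Unset Printing Implicit Defensive.
Import Order.TTheory GRing.Theory Num.Theory.
Local Open Scope ring_scope.

Section SummationByParts.
Variable R : comPzRingType.

Definition backward_diff (t : nat -> R) (l : nat) : R :=
  t l - (if l is l'.+1 then t l' else 0).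

Lemma sum_backward_diff (t : nat -> R) k :
  \sum_(0 <= l < k.+1) backward_diff t l = t k.
Proof.
elim: k => [|k IHk]; first by rewrite big_nat1 /backward_diff subr0.
by rewrite big_nat_recr //= IHk /backward_diff addrC subrK.
Qed.

Lemma summation_by_parts (q t : nat -> R) K :
  \sum_(0 <= i < K) q i * t i =
  \sum_(0 <= l < K) backward_diff t l * \sum_(l <= i < K) q i.
Proof.
elim: K => [|K IHK]; first by rewrite !big_geq.
rewrite big_nat_recr //= IHK [RHS]big_nat_recr //= big_nat1.
under [in RHS]eq_big_nat => l /andP[_ lK] do
  rewrite (big_nat_recr _ _ _ (ltnW lK)) mulrDr.
rewrite big_split /= -addrA; congr (_ + _).
by rewrite -mulr_suml -mulrDl -big_nat_recr //= sum_backward_diff mulrC.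
Qed.

End SummationByParts.

Section NatExtension.
Variables (V : nmodType) (K : nat).

Definition nat_ext (f : 'I_K -> V) (k : nat) : V :=
  if insub k is Some i then f i else 0.

Lemma nat_ext_ord f (i : 'I_K) : nat_ext f i = f i.
Proof. by rewrite /nat_ext valK. Qed.

Lemma nat_ext_ge f k : (K <= k)%N -> nat_ext f k = 0.
Proof. by move=> Kk; rewrite /nat_ext insubF // ltnNge Kk. Qed.

Lemma nat_ext_lt f k (kK : (k < K)%N) : nat_ext f k = f (Ordinal kK).
Proof. exact: (nat_ext_ord f (Ordinal kK)). Qed.

Lemma sum_nat_ext f : \sum_(i < K) f i = \sum_(0 <= i < K) nat_ext f i.
Proof. by rewrite big_mkord; apply: eq_bigr => i _; rewrite nat_ext_ord. Qed.

Lemma sum_nat_ext_geq f l :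
  \sum_(l <= i < K) nat_ext f i = \sum_(i < K | (l <= i)%N) f i.
Proof. by rewrite big_geq_mkord; apply: eq_bigr => i _; rewrite nat_ext_ord. Qed.

End NatExtension.

Lemma sum_kronecker (R : pzSemiRingType) (T : finType) (y : T) (f : T -> R) :
  \sum_z (z == y)%:R * f z = f y.
Proof.
rewrite (bigD1 y) //= eqxx mul1r big1 ?addr0 // => z /negbTE ->.
exact: mul0r.
Qed.

Lemma sum_tagged (V : nmodType) (I : finType) (J : I -> finType)
    (F : {i : I & J i} -> V) :
  \sum_z F z = \sum_i \sum_(j : J i) F (Tagged J j).
Proof. by rewrite sig_big_dep; apply: eq_bigr => -[i j]. Qed.

Lemma sum_indicator_nat_ext (R : pzSemiRingType) K (f : 'I_K -> R) (k : nat) :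
  \sum_(i < K) (k == i :> nat)%:R * f i = nat_ext f k.
Proof.
rewrite /nat_ext; case: insubP => [i0 _ <- | kK].
  by under eq_bigr do rewrite val_eqE eq_sym; exact: sum_kronecker.
rewrite big1 // => i _; case: eqP => [ki | _]; last exact: mul0r.
by rewrite ki ltn_ord in kK.
Qed.

Definition ord_prev K (j : 'I_K) : 'I_K :=
  Ordinal (leq_ltn_trans (leq_pred j) (ltn_ord j)).

Lemma nat_ext_prev_le (R : numDomainType) K (t : 'I_K -> R) l :
  (forall j, t (ord_prev j) <= t j) -> (l < K)%N ->
  nat_ext t l.-1 <= nat_ext t l.
Proof.
move=> t_mono lK.
by rewrite -[l]/(val (Ordinal lK)) -[_.-1]/(val (ord_prev (Ordinal lK))) !nat_ext_ord.
Qed.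

Lemma sum_nat_ext_mul (R : pzSemiRingType) K (f g : 'I_K -> R) :
  \sum_(i < K) f i * g i = \sum_(0 <= i < K) nat_ext f i * nat_ext g i.
Proof. by rewrite big_mkord; apply: eq_bigr => i _; rewrite !nat_ext_ord. Qed.

Fixpoint prefix_argmax (R : realDomainType) (vn : nat -> R) (j : nat) : nat :=
  if j is j'.+1 then
    if vn (prefix_argmax vn j') < vn j then j else prefix_argmax vn j'
  else 0.

Section PrefixArgmax.
Variables (R : realDomainType) (vn : nat -> R).

Lemma prefix_argmax_le j : (prefix_argmax vn j <= j)%N.
Proof. by elim: j => [//|j IHj] /=; case: ifP => // _; exact: leqW. Qed.

Lemma le_prefix_argmax j : vn j <= vn (prefix_argmax vn j).
Proof. by case: j => [//|j] /=; case: ifP => [_ //|/negbT]; rewrite -leNgt. Qed.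

Lemma prefix_argmax_mono j : vn (prefix_argmax vn j) <= vn (prefix_argmax vn j.+1).
Proof. by rewrite /=; case: ifP => [/ltW | _]. Qed.

End PrefixArgmax.

Section PossibilityWeights.
Variables (R : realType) (K : nat) (pi : 'I_K -> R).
Hypothesis pi_sorted : sorted_possibility pi.

Definition poss_weight (j : 'I_K) : R := nat_ext pi j - nat_ext pi j.+1.

Lemma poss_weight_ge0 j : 0 <= poss_weight j.
Proof.
case: pi_sorted => pi01 [pi_noninc _]; rewrite /poss_weight nat_ext_ord subr_ge0.
case: (ltnP j.+1 K) => jK; last by rewrite nat_ext_ge //; case/andP: (pi01 j).
by rewrite nat_ext_lt; apply: pi_noninc => /=.
Qed.

Lemma sum_poss_weight_geq l : (l <= K)%N ->
  \sum_(l <= i < K) nat_ext poss_weight i = nat_ext pi l.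
Proof.
move=> lK; rewrite (@telescope_sumr_eq _ _ _ (fun k => - nat_ext pi k)) //.
  by rewrite nat_ext_ge // oppr0 sub0r opprK.
by move=> k /andP[_ kK]; rewrite nat_ext_lt /poss_weight /= opprK addrC.
Qed.

Lemma nat_ext_pi0 : (0 < K)%N -> nat_ext pi 0 = 1.
Proof. by case: pi_sorted => _ [_ pi0] K_gt0; rewrite nat_ext_lt pi0. Qed.

Lemma sum_poss_weight : (0 < K)%N -> \sum_j poss_weight j = 1.
Proof. by move=> K_gt0; rewrite sum_nat_ext sum_poss_weight_geq // nat_ext_pi0. Qed.

Lemma sum_poss_weight_lt (k : 'I_K) :
  \sum_(j < K | (j < k)%N) poss_weight j = 1 - pi k.
Proof.
have := sum_poss_weight (leq_ltn_trans (leq0n k) (ltn_ord k)).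
rewrite (bigID (fun j : 'I_K => (j < k)%N)) /=.
under [X in _ + X = _]eq_bigl do rewrite -leqNgt.
by rewrite -sum_nat_ext_geq sum_poss_weight_geq 1?ltnW // nat_ext_ord => <-; rewrite addrK.
Qed.

Lemma tail_mass_le p l : in_P pi p -> (0 < l < K)%N ->
  \sum_(i < K | (l <= i)%N) p i <= nat_ext pi l.
Proof.
case=> _ [p_sum1 p_nec] /andP[l_gt0 lK]; case: pi_sorted => pi01 [pi_noninc _].
set A := [set i : 'I_K | (i < l)%N].
have A_neq0 : A != set0.
  by apply/set0Pn; exists (Ordinal (ltn_trans l_gt0 lK)); rewrite inE.
have A_neqT : A != setT.
  by apply/negP => /eqP AT; have := in_setT (Ordinal lK); rewrite -AT inE ltnn.
have max_le : \big[Num.max/0]_(i in ~: A) pi i <= nat_ext pi l.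
  rewrite nat_ext_lt; apply: bigmax_le => [|i]; first by case/andP: (pi01 (Ordinal lK)).
  by rewrite !inE -leqNgt => li; apply: (pi_noninc (Ordinal lK) i).
have mass_split : \sum_(i in A) p i + \sum_(i < K | (l <= i)%N) p i = 1.
  rewrite -p_sum1 [RHS](bigID (mem A)) /=.
  by congr (_ + _); apply: eq_bigl => i; rewrite !inE -?leqNgt.
have := p_nec A A_neq0 A_neqT; move: mass_split max_le.
set sA := \sum_(i in A) _; set sT := \sum_(i < K | _) _; set M := \big[_/_]_(i in _) _.
lra.
Qed.

Lemma expectation_le_weighted_majorant p (v t : 'I_K -> R) :
  in_P pi p -> (forall j, v j <= t j) -> (forall j, t (ord_prev j) <= t j) ->
  \sum_i p i * v i <= \sum_j poss_weight j * t j.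
Proof.
move=> pP vt t_mono; have [p_ge0 [p_sum1 _]] := pP.
apply: (@le_trans _ _ (\sum_i p i * t i)).
  by apply: ler_sum => i _; apply: ler_wpM2l.
rewrite !sum_nat_ext_mul summation_by_parts [leRHS]summation_by_parts.
apply: ler_sum_nat => l /andP[_ lK].
rewrite sum_poss_weight_geq 1?ltnW //.
case: l lK => [|l] lK; first by rewrite -sum_nat_ext p_sum1 nat_ext_pi0.
apply: ler_wpM2l; first by rewrite subr_ge0; exact: (nat_ext_prev_le t_mono lK).
by rewrite sum_nat_ext_geq; apply: tail_mass_le.
Qed.

Section WorstCase.
Variable v : 'I_K -> R.

Let argmax_v := prefix_argmax (nat_ext v).

Lemma argmax_v_lt (j : 'I_K) : (argmax_v j < K)%N.
Proof. exact: leq_ltn_trans (prefix_argmax_le _ j) (ltn_ord j). Qed.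

Definition envelope (j : 'I_K) : R := nat_ext v (argmax_v j).

Lemma le_envelope j : v j <= envelope j.
Proof. by rewrite -nat_ext_ord; exact: le_prefix_argmax. Qed.

Lemma envelope_prev_le j : envelope (ord_prev j) <= envelope j.
Proof. by case: j => -[|j] jK //=; exact: prefix_argmax_mono. Qed.

Definition worst_case (i : 'I_K) : R :=
  \sum_j poss_weight j * (argmax_v j == i :> nat)%:R.

Lemma sum_worst_case (f : 'I_K -> R) :
  \sum_i worst_case i * f i = \sum_j poss_weight j * nat_ext f (argmax_v j).
Proof.
under eq_bigr do rewrite mulr_suml.
rewrite exchange_big; apply: eq_bigr => j _.
by rewrite -sum_indicator_nat_ext mulr_sumr; apply: eq_bigr => i _; rewrite mulrA.
Qed.

Lemma worst_case_in_P : (0 < K)%N -> in_P pi worst_case.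
Proof.
move=> K_gt0; split; [|split].
- by move=> i; apply: sumr_ge0 => j _; rewrite mulr_ge0 ?poss_weight_ge0 ?ler0n.
- have := sum_worst_case (fun _ => 1); under eq_bigr do rewrite mulr1; move=> ->.
  rewrite -[RHS](sum_poss_weight K_gt0); apply: eq_bigr => j _.
  by rewrite (nat_ext_lt _ (argmax_v_lt j)) mulr1.
move=> A _ A_neqT.
have [i0 i0A] : exists i0, i0 \notin A.
  apply/existsP; rewrite -negb_forall; apply: contra A_neqT => /forallP AT.
  by apply/eqP/setP => i; rewrite inE AT.
(* k is the first index outside A; every w_j with j < k is sent into A. *)
case: (@arg_minnP _ i0 (fun i => i \notin A) val i0A) => k kA k_min.
apply: (@le_trans _ _ (1 - pi k)).
  by rewrite lerD2l lerN2; apply: le_bigmax_cond; rewrite inE.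
have -> : \sum_(i in A) worst_case i = \sum_i worst_case i * (i \in A)%:R.
  by rewrite big_mkcond; apply: eq_bigr => i _; case: (i \in A); rewrite ?mulr1 ?mulr0.
rewrite -sum_poss_weight_lt sum_worst_case [leRHS](bigID (fun j : 'I_K => (j < k)%N)) /=.
rewrite -[leLHS]addr0; apply: lerD.
  apply: ler_sum => j jk; rewrite (nat_ext_lt _ (argmax_v_lt j)).
  have -> : Ordinal (argmax_v_lt j) \in A.
    apply: contraT => /k_min /=; rewrite leqNgt.
    by rewrite (leq_ltn_trans (prefix_argmax_le _ j) jk).
  by rewrite mulr1.
apply: sumr_ge0 => j _.
by rewrite mulr_ge0 ?poss_weight_ge0 // (nat_ext_lt _ (argmax_v_lt j)) ler0n.
Qed.

Lemma weighted_envelope_le b : (0 < K)%N ->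
  (forall p, in_P pi p -> \sum_i p i * v i <= b) ->
  \sum_j poss_weight j * envelope j <= b.
Proof.
by move=> K_gt0 robust; have := robust _ (worst_case_in_P K_gt0); rewrite sum_worst_case.
Qed.

End WorstCase.
End PossibilityWeights.

Lemma lin_system_mx (R : realType) n (Y C : finType)
    (coef_x : C -> 'I_n -> R) (coef_y : C -> Y -> R) (rhs : C -> R) :
  exists (A : 'M[R]_(#|{: C}|, n + #|{: Y}|)) (bb : 'cV[R]_#|{: C}|),
  forall x : 'cV[R]_n,
    (exists y : 'cV[R]_#|{: Y}|, lemx (A *m col_mx x y) bb) <->
    exists t : Y -> R, forall c,
      \sum_i coef_x c i * x i 0 + \sum_k coef_y c k * t k <= rhs c.
Proof.
pose Ax : 'M_(#|{: C}|, n) := \matrix_(c, i) coef_x (enum_val c) i.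
pose Ay : 'M_(#|{: C}|, #|{: Y}|) := \matrix_(c, k) coef_y (enum_val c) (enum_val k).
exists (row_mx Ax Ay), (\col_c rhs (enum_val c)) => x.
have rowE y c : (row_mx Ax Ay *m col_mx x y) c 0 =
    \sum_i coef_x (enum_val c) i * x i 0 +
    \sum_k coef_y (enum_val c) k * y (enum_rank k) 0.
  rewrite mul_row_col !mxE; congr (_ + _); first by apply: eq_bigr => i _; rewrite mxE.
  rewrite (reindex (@enum_rank Y)) /=; last exact/onW_bij/enum_rank_bij.
  by apply: eq_bigr => k _; rewrite mxE enum_rankK.
split=> [[y y_sol] | [t t_sol]].
  exists (fun k => y (enum_rank k) 0) => c.
  by have := y_sol (enum_rank c) 0; rewrite rowE mxE enum_rankK.
exists (\col_k t (enum_val k)) => c j; rewrite ord1 rowE mxE.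
by under [X in _ + X <= _]eq_bigr => k _ do rewrite mxE enum_rankK; exact: t_sol.
Qed.

Section RobustLP.
(* Keeps the index r of [a] and [pi] explicit. *)
Local Unset Implicit Arguments.
Variables (R : realType) (n m q : nat) (D : 'M[R]_(q, n)) (d : 'cV[R]_q)
  (K : 'I_m -> nat) (a : forall r : 'I_m, 'I_(K r) -> 'rV[R]_n)
  (pi : forall r : 'I_m, 'I_(K r) -> R) (b : 'I_m -> R).
Local Set Implicit Arguments.

Definition scenario := {r : 'I_m & 'I_(K r)}.

Definition scen r (j : 'I_(K r)) : scenario := Tagged (fun r => 'I_(K r)) j.

Definition scen_prev (z : scenario) : scenario := scen (ord_prev (tagged z)).

(* Rows: D x <= d; one budget row per r; t_(r,j) >= a^r_j x; t_(r,j-1) <= t_(r,j). *)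
Definition lp_row := ((('I_q + 'I_m) + scenario) + scenario)%type.

Definition lp_coef_x (c : lp_row) : 'I_n -> R :=
  match c with
  | inl (inl (inl i)) => fun k => D i k
  | inl (inl (inr _)) => fun _ => 0
  | inl (inr z) => fun k => a (tag z) (tagged z) 0 k
  | inr _ => fun _ => 0
  end.

Definition lp_coef_t (c : lp_row) : scenario -> R :=
  match c with
  | inl (inl (inl _)) => fun _ => 0
  | inl (inl (inr r)) => fun z => if tag z == r then poss_weight (pi (tag z)) (tagged z) else 0
  | inl (inr z') => fun z => - (z == z')%:R
  | inr z' => fun z => (z == scen_prev z')%:R - (z == z')%:R
  end.

Definition lp_rhs (c : lp_row) : R :=
  match c with
  | inl (inl (inl i)) => d i 0
  | inl (inl (inr r)) => b r
  | inl (inr _) | inr _ => 0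
  end.

Definition lp_lhs (x : 'cV[R]_n) (t : scenario -> R) (c : lp_row) : R :=
  \sum_k lp_coef_x c k * x k 0 + \sum_z lp_coef_t c z * t z.

Lemma card_scenario : #|{: scenario}| = (\sum_(r < m) K r)%N.
Proof. by rewrite card_tagged sumnE big_map big_enum; apply: eq_bigr => r _; rewrite card_ord. Qed.

Lemma card_lp_row : #|{: lp_row}| = (q + m + 2 * \sum_(r < m) K r)%N.
Proof. by rewrite !card_sum !card_ord card_scenario mul2n -addnn !addnA. Qed.

Lemma lp_lhs_Dx x t i : lp_lhs x t (inl (inl (inl i))) = (D *m x) i 0.
Proof. by rewrite /lp_lhs /= [X in _ + X]big1 ?addr0 ?mxE // => z _; rewrite mul0r. Qed.

Lemma lp_lhs_budget x t r :
  lp_lhs x t (inl (inl (inr r))) = \sum_j poss_weight (pi r) j * t (scen j).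
Proof.
rewrite /lp_lhs /= big1 ?add0r => [|k _]; last exact: mul0r.
rewrite sum_tagged (bigD1 r) //= eqxx [X in _ + X]big1 ?addr0 // => r' /negbTE r'r.
by apply: big1 => j _; rewrite /= r'r mul0r.
Qed.

Lemma lp_lhs_cover x t r j :
  lp_lhs x t (inl (inr (scen j))) = (a r j *m x) 0 0 - t (scen j).
Proof.
rewrite /lp_lhs /= mxE; congr (_ + _).
by under eq_bigr do rewrite mulNr; rewrite sumrN sum_kronecker.
Qed.

Lemma lp_lhs_mono x t r (j : 'I_(K r)) :
  lp_lhs x t (inr (scen j)) = t (scen (ord_prev j)) - t (scen j).
Proof.
rewrite /lp_lhs /= big1 ?add0r => [|k _]; last exact: mul0r.
by under eq_bigr do rewrite mulrBl; rewrite sumrB !sum_kronecker.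
Qed.

Lemma robust_feasible_lpP x :
  (forall r, (0 < K r)%N) -> (forall r, sorted_possibility (pi r)) ->
  robust_feasible D d a pi b x <-> exists t, forall c, lp_lhs x t c <= lp_rhs c.
Proof.
move=> K_gt0 pi_sorted; split.
- case=> Dx robust.
  exists (fun z => envelope (fun j => (a (tag z) j *m x) 0 0) (tagged z)).
  case=> [[[i|r]|[r j]]|[r j]].
  + by rewrite lp_lhs_Dx; exact: Dx.
  + by rewrite lp_lhs_budget /=; exact (weighted_envelope_le (pi_sorted r) (K_gt0 r) (robust r)).
  + by rewrite (lp_lhs_cover _ _ j) /= subr_le0; exact (le_envelope _ j).
  + by rewrite (lp_lhs_mono _ _ j) /= subr_le0; exact (envelope_prev_le _ j).
case=> t sys; split=> [i j | r p pP].
  by rewrite ord1; have := sys (inl (inl (inl i))); rewrite lp_lhs_Dx.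
apply: le_trans (expectation_le_weighted_majorant (pi_sorted r) pP _ _) _.
- by move=> j; have := sys (inl (inr (scen j))); rewrite lp_lhs_cover subr_le0; exact.
- by move=> j; have := sys (inr (scen j)); rewrite lp_lhs_mono subr_le0; exact.
by have := sys (inl (inl (inr r))); rewrite lp_lhs_budget.
Qed.
End RobustLP.

Unset Implicit Arguments.

Theorem corollary1 (R : realType) (n m q : nat)
  (c : 'cV[R]_n) (D : 'M[R]_(q, n)) (d : 'cV[R]_q)
  (K : 'I_m -> nat) (a : forall r : 'I_m, 'I_(K r) -> 'rV[R]_n)
  (pi : forall r : 'I_m, 'I_(K r) -> R) (b : 'I_m -> R)
  (hK : forall r, (0 < K r)%N)
  (hpi : forall r, sorted_possibility (pi r)) :
  exists (N M : nat) (A : 'M[R]_(M, n + N)) (bb : 'cV[R]_M),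
    (N <= m + \sum_(r < m) K r)%N /\
    (M <= q + m + 2 * \sum_(r < m) K r)%N /\
    forall x : 'cV[R]_n,
      robust_feasible D d a pi b x <->
      exists y : 'cV[R]_N, lemx (A *m col_mx x y) bb.
Proof.
have [A [bb Abb]] := lin_system_mx (lp_coef_x D a) (lp_coef_t pi) (lp_rhs d b).
exists #|{: scenario K}|, #|{: lp_row q K}|, A, bb; split; [|split].
- by rewrite card_scenario leq_addl.
- by rewrite card_lp_row.
by move=> x; rewrite Abb; exact: robust_feasible_lpP.
Qed.
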